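(* Let $\mathbf H\subset GL_m(\mathbb C)$ be a finite unitary group with a fixed generating set $X_{\mathbf H}$, and $\mathbf G=\mathbf H\wr\mathrm{Sym}_n$ with the subgroup sequence, coset leaders, initial vector and generating sets $X_k$ of $\mathbf G_k$ described in the context. Then the Error Control Property holds for every consecutive pair $\mathbf G_{k-1}<\mathbf G_k$.
   Context: $\mathbf G$ is the group of $mn\times mn$ block permutation matrices with nonzero blocks in $\mathbf H$; elements written $\sigma(h_1,\dots,h_n)$, $\sigma\in\mathrm{Sym}_n$, $h_i\in\mathbf H$. Subgroups: $\mathbf G_0=\{I\}$, $\mathbf G_{2l-1}=(\mathbf H\wr\mathrm{Sym}_l)\oplus\{I_{m(n-l)}\}$ ($1\le l\le n$), $\mathbf G_{2l}=(\mathbf H\wr\mathrm{Sym}_l)\oplus\mathbf H\oplus\{I_{m(n-l-1)}\}$ ($1\le l\le n-1$). Coset leaders: $\operatorname{CL}(\mathbf G_1/\mathbf G_0)=\mathbf G_1$; $\operatorname{CL}(\mathbf G_{2l}/\mathbf G_{2l-1})=\{(1,\dots,1,h,1,\dots,1):h\in\mathbf H\text{ in slot }l+1\}$; $\operatorname{CL}(\mathbf G_{2l+1}/\mathbf G_{2l})=\{(j\ j{+}1\ \cdots\ l{+}1):1\le j\le l+1\}$. Initial vector $\mathbf x_0=(u_1\mathbf v_0,\dots,u_n\mathbf v_0)$ with $\mathbf v_0\in\mathbb C^m$ a unit vector fixed by no nonidentity element of $\mathbf H$ and real $0<u_1<\cdots<u_n$, $\|\mathbf x_0\|=1$. Generators: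 $X_{2l-1}=\{(h,1,\dots,1):h\in X_{\mathbf H}\}\cup\{(1\,2),(2\,3),\dots,(l{-}1\ l)\}$, $X_{2l}=X_{2l-1}\cup\{(1,\dots,1,h,1,\dots,1):h\in\mathbf H\text{ in slot }l+1\}$, $X_0=\emptyset$. Error Control Property for $H<K$ with coset leaders $\operatorname{CL}(K/H)$ and generating sets $X_H,X_K$: for all $b\in X_K\cup X_K^{-1}$ and $c\in\operatorname{CL}(K/H)$, either $bc\in\operatorname{CL}(K/H)$ or $c^{-1}bc\in X_H\cup X_H^{-1}$ (where $X^{-1}=\{a^{-1}:a\in X\}$). *)

From mathcomp Require Import all_boot all_order all_algebra all_fingroup.
Set Implicit Arguments. Unset Strict Implicit. Unset Printing Implicit Defensive.
Import Order.TTheory GRing.Theory Num.Theory.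
Local Open Scope ring_scope.

(* An mn x mn block matrix is represented as an n x n matrix whose entries
   are m x m matrices; block-matrix multiplication is then exactly [*m]. *)
Notation blk C m n := 'M['M[C]_m]_n.

Section Wreath.
Variables (C : numClosedFieldType) (m n : nat).

(* sigma(h_1,...,h_n) = P_sigma * diag(h_1,...,h_n), where P_sigma is the block
   permutation matrix sending the j-th block basis vector to the sigma(j)-th:
   block (i,j) is h_j if i = sigma j and 0 otherwise. *)
Definition bperm (s : 'S_n) (h : 'I_n -> 'M[C]_m) : blk C m n :=
  \matrix_(i, j) (if i == s j then h j else 0).

(* (1,...,1,h,1,...,1) with h in (0-based) slot k *)
Definition slotmx (k : 'I_n) (h : 'M[C]_m) : blk C m n :=
  bperm 1 (fun i => if i == k then h else 1%:M).

Definition pmx (s : 'S_n) : blk C m n := bperm s (fun _ => 1%:M).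

(* the cycle (j j+1 ... l+1) of the paper, written 0-based as
   j0 -> j0+1 -> ... -> l -> j0  (with j0 = j-1) *)
Definition cycfun (j0 l i : nat) : nat :=
  if ((j0 <= i) && (i < l))%N then i.+1 else if i == l then j0 else i.

(* X_{2l-1} (paper, 1-based), l >= 1 *)
Definition Xodd (XH : seq 'M[C]_m) (l : nat) (A : blk C m n) : Prop :=
  (exists (h : 'M[C]_m) (k : 'I_n), h \in XH /\ val k = 0%N /\ A = slotmx k h)
  \/ (exists i i' : 'I_n, val i' = (val i).+1 /\ (val i').+1 <= l
        /\ A = pmx (tperm i i'))%N.

(* X_{2l} = X_{2l-1} u {(1,..,1,h,1,..,1) : h in H, h in slot l+1 (1-based)} *)
Definition Xeven (HH XH : seq 'M[C]_m) (l : nat) (A : blk C m n) : Prop :=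
  Xodd XH l A \/
  (exists (h : 'M[C]_m) (k : 'I_n), h \in HH /\ val k = l /\ A = slotmx k h).

Definition Xk (HH XH : seq 'M[C]_m) (k : nat) : blk C m n -> Prop :=
  if k == 0%N then (fun _ => False)
  else if odd k then Xodd XH k.+1./2 else Xeven HH XH k./2.

Definition CLk (HH : seq 'M[C]_m) (k : nat) (A : blk C m n) : Prop :=
  if k == 1%N then
    (* CL(G_1/G_0) = G_1 = {(h,1,...,1) : h in H} *)
    exists (h : 'M[C]_m) (k0 : 'I_n), h \in HH /\ val k0 = 0%N /\ A = slotmx k0 h
  else if odd k then
    (* k = 2l+1 : cycles (j ... l+1), 1 <= j <= l+1 *)
    exists (j0 : nat) (s : 'S_n), (j0 <= k./2)%N /\
      (forall i : 'I_n, val (s i) = cycfun j0 k./2 (val i)) /\ A = pmx s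
  else
    (* k = 2l : (1,...,1,h,1,...,1), h in H in slot l+1 (1-based) *)
    exists (h : 'M[C]_m) (k0 : 'I_n), h \in HH /\ val k0 = k./2 /\ A = slotmx k0 h.

Definition invset (X : blk C m n -> Prop) (b : blk C m n) : Prop :=
  exists a, X a /\ a *m b = 1%:M /\ b *m a = 1%:M.

Definition ECP (XH XK CL : blk C m n -> Prop) : Prop :=
  forall b c : blk C m n, (XK b \/ invset XK b) -> CL c ->
    CL (b *m c) \/
    (forall ci : blk C m n, ci *m c = 1%:M -> c *m ci = 1%:M ->
       XH (ci *m b *m c) \/ invset XH (ci *m b *m c)).

End Wreath.

Definition unitary_group (C : numClosedFieldType) (m : nat) (HH : seq 'M[C]_m) :=
  [/\ (1%:M : 'M[C]_m) \in HH,
      {in HH &, forall g h, g *m h \in HH},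
      {in HH, forall h, exists2 h', h' \in HH & h *m h' = 1%:M /\ h' *m h = 1%:M}
    & {in HH, forall h, h *m (map_mx Num.conj h)^T = 1%:M}].

Definition generates (C : numClosedFieldType) (m : nat) (HH XH : seq 'M[C]_m) :=
  {subset XH <= HH} /\
  {in HH, forall h, exists s : seq 'M[C]_m,
     (forall x, x \in s -> x \in XH \/
        exists2 y, y \in XH & y *m x = 1%:M /\ x *m y = 1%:M)
     /\ h = foldr mulmx 1%:M s}.

From mathcomp Require Import all_boot all_order all_algebra all_fingroup.
From mathcomp Require Import zify.
Import Order.TTheory GRing.Theory Num.Theory.
Set Implicit Arguments. Unset Strict Implicit. Unset Printing Implicit Defensive.
Local Open Scope ring_scope.

(* A generator b of G_k either sends the coset leader c to another leader,
   or c^-1 b c is a generator of G_(k-1) (or the inverse of one, since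
   conjugation preserves inverse pairs).  For k = 2l the leader is a block in
   slot l+1, which commutes with every generator of G_(2l-1).  For k = 2l+1 the
   leader is the cycle (j ... l+1): it carries the block in slot 1 to slot 1 or
   to slot l+1, and an adjacent transposition (i i+1) either commutes with it,
   lengthens or shortens it by one, or is conjugated to (i-1 i). *)

Definition is_cycfun n (j0 l : nat) (s : 'S_n) :=
  forall i : 'I_n, val (s i) = cycfun j0 l (val i).

Lemma val_tperm n (x y z : 'I_n) : val (tperm x y z) =
  (if val z == val x then val y else if val z == val y then val x else val z).
Proof.
case: tpermP => [->|->|/eqP nx /eqP ny]; rewrite ?eqxx //; first by case: eqP.
by rewrite !val_eqE (negbTE nx) (negbTE ny).
Qed.

(* Splits on the innermost conditionals first, so that [lia] only sees arithmetic. *)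
Ltac case_ifs := repeat match goal with |- context [if ?c then _ else _] =>
  match c with context [if _ then _ else _] => fail 1 | _ =>
    let H := fresh "H" in destruct c eqn:H end end.

Section CycleTimesAdjacentTransposition.
Variables (n j0 l : nat) (s : 'S_n) (i i' : 'I_n).
Hypotheses (cyc_s : is_cycfun j0 l s) (j0_le_l : (j0 <= l)%N).
Hypotheses (adj : val i' = (val i).+1) (i'_le_l : (val i' <= l)%N).

Lemma cycfun_tperm_disjoint : (val i' < j0)%N -> (s * tperm i i' = tperm i i' * s)%g.
Proof.
move=> lt_i'j0; apply/permP => x; apply: val_inj.
by rewrite !permM val_tperm !cyc_s val_tperm /cycfun; case_ifs; lia.
Qed.

Lemma cycfun_tperm_lower : val i' = j0 -> is_cycfun j0.-1 l (s * tperm i i').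
Proof. by move=> ei' x; rewrite permM val_tperm !cyc_s /cycfun; case_ifs; lia. Qed.

Lemma cycfun_tperm_upper : val i = j0 -> is_cycfun j0.+1 l (s * tperm i i').
Proof. by move=> ei x; rewrite permM val_tperm !cyc_s /cycfun; case_ifs; lia. Qed.

Lemma cycfun_tperm_conj (i0 : 'I_n) : val i = (val i0).+1 -> (j0 < val i)%N ->
  (s * tperm i i' = tperm i0 i * s)%g.
Proof.
move=> ei lt_j0i; apply/permP => x; apply: val_inj.
by rewrite !permM val_tperm !cyc_s val_tperm /cycfun; case_ifs; lia.
Qed.

End CycleTimesAdjacentTransposition.

Section BlockMonomialMatrices.
Variables (C : numClosedFieldType) (m n : nat).
Implicit Types (s t : 'S_n) (a b c : blk C m n).
Local Notation P s := (@pmx C m n s).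

Lemma eq_bperm s (g h : 'I_n -> 'M[C]_m) : g =1 h -> bperm s g = bperm s h.
Proof. by move=> gh; apply/matrixP => i j; rewrite !mxE gh. Qed.

Lemma bperm_mul s t (g h : 'I_n -> 'M[C]_m) :
  bperm s g *m bperm t h = bperm (t * s) (fun j => g (t j) *m h j).
Proof.
apply/matrixP => i j; rewrite !mxE (bigD1 (t j)) //= !mxE eqxx.
rewrite big1 ?addr0; last by move=> k /negbTE nk; rewrite !mxE nk mulr0.
by rewrite permM; case: eqP => _; rewrite ?mul0r.
Qed.

Lemma pmx1 : P 1 = 1%:M.
Proof. by apply/matrixP => i j; rewrite !mxE perm1; case: eqP. Qed.

Lemma pmxM s t : P s *m P t = P (t * s).
Proof. by rewrite bperm_mul; apply: eq_bperm => j; rewrite mul1mx. Qed.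

Lemma slotmxM k (g h : 'M[C]_m) : slotmx k g *m slotmx k h = slotmx k (g *m h) :> blk C m n.
Proof.
rewrite bperm_mul mulg1; apply: eq_bperm => j.
by rewrite perm1; case: eqP => _; rewrite ?mul1mx.
Qed.

Lemma slotmx1 (k : 'I_n) : slotmx k 1%:M = 1%:M :> blk C m n.
Proof. by rewrite -pmx1; apply: eq_bperm => j; case: eqP. Qed.

Lemma slotmxC k k' (g h : 'M[C]_m) : k != k' ->
  slotmx k g *m slotmx k' h = slotmx k' h *m slotmx k g :> blk C m n.
Proof.
move=> /negbTE kk'; rewrite !bperm_mul; apply: eq_bperm => j.
rewrite perm1; case: (eqVneq j k) => [->|_]; first by rewrite kk' mulmx1 mul1mx.
by case: eqP; rewrite ?mulmx1 ?mul1mx.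
Qed.

Lemma pmx_slotmx s k (h : 'M[C]_m) : P s *m slotmx k h = slotmx (s k) h *m P s.
Proof.
rewrite !bperm_mul mulg1 mul1g; apply: eq_bperm => j.
by rewrite (inj_eq perm_inj) mul1mx mulmx1.
Qed.

Lemma mulmx_inv_uniq a a' b : a' *m a = 1%:M -> a *m b = 1%:M -> b = a'.
Proof. by move=> a'a ab; rewrite -[b]mul1mx -a'a -mulmxA ab mulmx1. Qed.

Lemma pmx_tperm_inv (i i' : 'I_n) b : P (tperm i i') *m b = 1%:M -> b = P (tperm i i').
Proof. by apply: mulmx_inv_uniq; rewrite pmxM tperm2 pmx1. Qed.

Definition conj_gen (X : blk C m n -> Prop) b c :=
  forall ci, ci *m c = 1%:M -> c *m ci = 1%:M ->
    X (ci *m b *m c) \/ invset X (ci *m b *m c).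

Lemma conj_gen_of X b c z : b *m c = c *m z -> X z -> conj_gen X b c.
Proof. by move=> bc Xz ci cic _; left; rewrite -mulmxA bc mulmxA cic mul1mx. Qed.

Lemma conj_gen_of_inv X a b c z : a *m c = c *m z -> X z ->
  a *m b = 1%:M -> b *m a = 1%:M -> conj_gen X b c.
Proof.
move=> ac Xz ab ba ci cic cci; right; exists z; split=> //.
have -> : z = ci *m a *m c by rewrite -mulmxA ac mulmxA cic mul1mx.
split.
- by rewrite !mulmxA -(mulmxA _ c) cci mulmx1 -(mulmxA _ a) ab mulmx1.
- by rewrite !mulmxA -(mulmxA _ c) cci mulmx1 -(mulmxA _ b) ba mulmx1.
Qed.

End BlockMonomialMatrices.

Section ErrorControl.
Variables (C : numClosedFieldType) (m n : nat) (HH XH : seq 'M[C]_m).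
Hypothesis HHM : {in HH &, forall g h, g *m h \in HH}.
Hypothesis HHV : {in HH, forall h, exists2 h', h' \in HH & h *m h' = 1%:M /\ h' *m h = 1%:M}.
Hypothesis XHH : {subset XH <= HH}.
Local Notation P s := (@pmx C m n s).
Local Notation slot := (@slotmx C m n).
Local Notation X k := (@Xk C m n HH XH k).
Local Notation CL k := (@CLk C m n HH k).
Implicit Types (a b c : blk C m n).

Lemma Xk_odd l : X l.*2.+1 = @Xodd C m n XH l.+1.
Proof. by rewrite /Xk /= odd_double /= half_double. Qed.

Lemma Xk_even l : (0 < l)%N -> X l.*2 = @Xeven C m n HH XH l.
Proof.
by move=> l0; rewrite /Xk odd_double half_double ifF // double_eq0; case: l l0.
Qed.

Lemma CLk_even l : CL l.*2 = fun A : blk C m n =>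
  exists (h : 'M[C]_m) (k0 : 'I_n), h \in HH /\ val k0 = l /\ A = slot k0 h.
Proof.
rewrite /CLk odd_double half_double; case: eqP => // E.
by move: (odd_double l); rewrite E.
Qed.

Lemma CLk_odd l : (0 < l)%N -> CL l.*2.+1 = fun A : blk C m n =>
  exists (j0 : nat) (s : 'S_n), (j0 <= l)%N /\ is_cycfun j0 l s /\ A = P s.
Proof.
move=> l0; rewrite /CLk eqSS double_eq0.
by case: l l0 => // l _; rewrite /= odd_double /= uphalf_double.
Qed.

Lemma slotmx_inv k x b : x \in HH -> slot k x *m b = 1%:M ->
  exists2 x', x' \in HH & b = slot k x'.
Proof.
move=> /HHV [x' x'H [_ x'x]] xb; exists x' => //.
by apply: mulmx_inv_uniq xb; rewrite slotmxM x'x slotmx1.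
Qed.

Lemma Xodd_slotmx_commute l a (k : 'I_n) h : (0 < l)%N -> val k = l ->
  Xodd XH l a -> a *m slot k h = slot k h *m a.
Proof.
move=> l0 vk [[x [k1 [_ [vk1 ->]]]] | [i [i' [adj [le_i'l ->]]]]].
  by apply: slotmxC; rewrite -val_eqE vk vk1 eq_sym -lt0n.
by rewrite pmx_slotmx tpermD // -val_eqE vk; apply/eqP; move: adj le_i'l => /= *; lia.
Qed.

Lemma ecp1 : ECP (X 0) (X 1) (CL 1).
Proof.
have Xk1 : X 1 = @Xodd C m n XH 1 by rewrite -(Xk_odd 0).
rewrite Xk1 => b c Hb [h [k0 [hH [vk0 ->]]]]; left.
suff [x xH ->] : exists2 x, x \in HH & b = slot k0 x.
  by exists (x *m h), k0; rewrite slotmxM; split=> //; apply: HHM.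
have slot0 (k1 : 'I_n) : val k1 = 0%N -> k1 = k0.
  by move=> vk1; apply: val_inj; rewrite vk1.
case: Hb => [[[x [k1 [xX [/slot0 -> ->]]]] | [i [i' [-> [//]]]]] |
             [a [[[x [k1 [xX [/slot0 -> ->]]]] | [i [i' [-> [//]]]]] [ab _]]]].
- by exists x; first exact: XHH.
- exact: slotmx_inv (XHH xX) ab.
Qed.

Lemma ecp_even l : (0 < l)%N -> ECP (X (l.*2).-1) (X l.*2) (CL l.*2).
Proof.
move=> l0; have -> : X (l.*2).-1 = Xodd XH l.
  by case: l l0 => // l _; rewrite doubleS Xk_odd.
rewrite Xk_even // CLk_even => b c Hb [h [k0 [hH [vk0 ->]]]].
have same_slot (k1 : 'I_n) : val k1 = l -> k1 = k0.
  by move=> vk1; apply: val_inj; rewrite vk1.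
case: Hb => [[Ha | [x [k1 [xH [/same_slot -> ->]]]]] |
             [a [[Ha | [x [k1 [xH [/same_slot -> ->]]]]] [ab ba]]]].
- by right; exact: conj_gen_of (Xodd_slotmx_commute h l0 vk0 Ha) Ha.
- by left; exists (x *m h), k0; rewrite slotmxM; split=> //; apply: HHM.
- by right; exact: (conj_gen_of_inv (Xodd_slotmx_commute h l0 vk0 Ha) Ha ab ba).
- have [x' x'H ->] := slotmx_inv xH ab.
  by left; exists (x' *m h), k0; rewrite slotmxM; split=> //; apply: HHM.
Qed.

Lemma cycfun_slotmx0 l j0 s (k1 : 'I_n) x :
  (l < n)%N -> (j0 <= l)%N -> is_cycfun j0 l s -> x \in XH -> val k1 = 0%N ->
  exists2 k', s k' = k1 & Xeven HH XH l (slot k' x).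
Proof.
move=> ln j0l cyc_s xX vk1; case: (posnP j0) => [j00 | j0_gt0].
- exists (Ordinal ln); first by apply: val_inj; rewrite cyc_s vk1 /cycfun j00 ltnn eqxx.
  by right; exists x, (Ordinal ln); split=> //; apply: XHH.
- exists k1; first by apply: val_inj; rewrite cyc_s vk1 /cycfun; case_ifs; lia.
  by left; left; exists x, k1.
Qed.

Lemma cycfun_adjacent_tperm l j0 s (i i' : 'I_n) : (0 < l)%N -> (j0 <= l)%N ->
  is_cycfun j0 l s -> val i' = (val i).+1 -> (val i' <= l)%N ->
  CL l.*2.+1 (P (tperm i i') *m P s) \/ conj_gen (Xeven HH XH l) (P (tperm i i')) (P s).
Proof.
move=> l0 j0l cyc_s adj i'l; rewrite CLk_odd // pmxM.
have : (val i' < j0 \/ val i' = j0 \/ val i = j0 \/ j0 < val i)%N by lia.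
case=> [lt_i'j0 | [ei' | [ei | lt_j0i]]].
- right; apply: (conj_gen_of (z := P (tperm i i'))); last first.
    by left; right; exists i, i'; split=> //; split=> //; lia.
  by rewrite !pmxM (cycfun_tperm_disjoint cyc_s).
- by left; exists j0.-1, (s * tperm i i')%g; split; [lia | split; [apply: cycfun_tperm_lower|]].
- by left; exists j0.+1, (s * tperm i i')%g; split; [lia | split; [apply: cycfun_tperm_upper|]].
- have i0n : ((val i).-1 < n)%N by apply: leq_ltn_trans (ltn_ord i); apply: leq_pred.
  pose i0 := Ordinal i0n; have ei0 : val i = (val i0).+1.
    by rewrite /= prednK //; apply: leq_ltn_trans lt_j0i.
  right; apply: (conj_gen_of (z := P (tperm i0 i))); last first.
    by left; right; exists i0, i; split=> //; split=> //; lia.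
  by rewrite !pmxM (cycfun_tperm_conj cyc_s j0l adj i'l ei0 lt_j0i).
Qed.

Lemma ecp_odd l : (0 < l)%N -> (l < n)%N ->
  ECP (X (l.*2.+1).-1) (X l.*2.+1) (CL l.*2.+1).
Proof.
move=> l0 ln; rewrite /= Xk_even // Xk_odd => b c Hb.
rewrite {1}CLk_odd // => [[j0 [s [j0l [cyc_s ->]]]]].
case: Hb => [[[x [k1 [xX [vk1 ->]]]] | [i [i' [adj [i'l ->]]]]] |
             [a [[[x [k1 [xX [vk1 Ea]]]] | [i [i' [adj [i'l Ea]]]]] [ab ba]]]].
- have [k' sk' Xk'] := cycfun_slotmx0 ln j0l cyc_s xX vk1.
  by right; apply: (conj_gen_of (z := slot k' x)) Xk'; rewrite pmx_slotmx sk'.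
- exact: cycfun_adjacent_tperm l0 j0l cyc_s adj i'l.
- have [k' sk' Xk'] := cycfun_slotmx0 ln j0l cyc_s xX vk1.
  by right; apply: (conj_gen_of_inv (z := slot k' x)) Xk' ab ba; rewrite Ea pmx_slotmx sk'.
- rewrite Ea in ab; rewrite (pmx_tperm_inv ab).
  exact: cycfun_adjacent_tperm l0 j0l cyc_s adj i'l.
Qed.

End ErrorControl.

Theorem mainTheorem9 (C : numClosedFieldType) (m n : nat)
  (HH XH : seq 'M[C]_m)
  (v0 : 'cV[C]_m) (u : 'I_n -> C) :
  unitary_group HH ->
  generates HH XH ->
  \sum_(i < m) `|v0 i 0| ^+ 2 = 1 ->
  {in HH, forall h, h *m v0 = v0 -> h = 1%:M} ->
  (forall i, u i \is Num.real) ->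
  (forall i : 'I_n, val i = 0%N -> 0 < u i) ->
  (forall i j : 'I_n, (val i < val j)%N -> u i < u j) ->
  \sum_(i < n) \sum_(k < m) `|u i * v0 k 0| ^+ 2 = 1 ->
  forall k : nat, (1 <= k <= (2 * n).-1)%N ->
    ECP (@Xk C m n HH XH k.-1) (@Xk C m n HH XH k) (@CLk C m n HH k).
Proof.
(* Neither unitarity nor the initial vector plays a role in the Error Control Property. *)
move=> [_ HHM HHV _] [XHH _] _ _ _ _ _ _ k /andP [k_ge1 k_le].
have := odd_double_half k; case: (odd k) => /= Ek; rewrite -Ek.
- have [l0 | l_gt0] := posnP k./2; first by rewrite l0; exact: ecp1.
  by apply: ecp_odd => //; lia.
- by apply: ecp_even => //; lia.
Qed.
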